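(* Let $q$ be a prime power, $n\ge1$, $A\in GL_n(\mathbb{F}_q)$, let $p_{A,1}^{e_{A,1}},\dots,p_{A,m}^{e_{A,m}}\in\mathbb{F}_q[x]$ be the elementary divisors of $A$ (the monic irreducible polynomials $p_{A,j}$ not necessarily distinct), and let $\mathfrak{S}_A=\langle A\rangle<GL_n(\mathbb{F}_q)$. Then for every $i\in\mathbb{N}$ with $\gcd(i,|\mathfrak{S}_A|)=1$, the matrix $A^i$ has exactly $m$ elementary divisors, and if they are denoted $p_{A^i,1}^{e_{A^i,1}},\dots,p_{A^i,m}^{e_{A^i,m}}$, then, after a suitable reordering, $\mathrm{ord}(p_{A,j})=\mathrm{ord}(p_{A^i,j})$ and $e_{A,j}=e_{A^i,j}$ for $j=1,\dots,m$.
   Context: The elementary divisors of $A\in GL_n(\mathbb{F}_q)$ are the prime-power polynomials $p^{e}$ ($p$ monic irreducible) appearing in the rational canonical form of $A$, i.e. the unique (up to order) list such that $A$ is conjugate in $GL_n(\mathbb{F}_q)$ to the block diagonal matrix of the companion matrices of these polynomials. For $p\in\mathbb{F}_q[x]$ with $p(0)\neq 0$, $\mathrm{ord}(p)$ is the least positive integer $e$ with $p\mid x^e-1$. *)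

From Stdlib Require Import ClassicalDescription.
From HB Require Import structures.
From mathcomp Require Import all_boot all_order all_algebra all_fingroup all_field.
Set Implicit Arguments. Unset Strict Implicit. Unset Printing Implicit Defensive.
Import GRing.Theory.
Local Open Scope ring_scope.

(* ord(p): the least e > 0 with p | x^e - 1 (set to 0 if no such e exists,
   which never happens for p(0) <> 0 over a finite field). *)
Definition poly_ord (F : fieldType) (p : {poly F}) : nat :=
  match excluded_middle_informative
          (exists e : nat, (0 < e)%N && (p %| 'X^e - 1)) with
  | left h => ex_minn h
  | right _ => 0%N
  end.

Fixpoint bdiag_comp (F : fieldType) (s : seq {poly F}) :
    'M[F]_(foldr (fun (p : {poly F}) k => (size p).-1 + k)%N 0%N s) :=
  match s with
  | [::] => 0
  | p :: s' => block_mx (companionmx p) 0 0 (bdiag_comp s')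
  end.

(* Conjugacy of square matrices possibly indexed by different (hence, in
   fact, equal) dimensions: A = P B P^-1 with P invertible. *)
Definition mx_similar (F : fieldType) (n k : nat) (A : 'M[F]_n) (B : 'M[F]_k) :=
  exists (P : 'M[F]_(n, k)) (Q : 'M[F]_(k, n)),
    [/\ P *m Q = 1%:M, Q *m P = 1%:M & A *m P = P *m B].

(* s = [:: (p_1, e_1); ...; (p_m, e_m)] is the list of elementary divisors
   p_j^e_j of A: p_j monic irreducible, e_j >= 1, and A is conjugate to the
   block-diagonal matrix of the companion matrices of the p_j^e_j. *)
Definition elem_divisors (F : fieldType) (n : nat) (A : 'M[F]_n)
    (s : seq ({poly F} * nat)) : Prop :=
  [/\ forall x, x \in s -> x.1 \is monic,
      forall x, x \in s -> irreducible_poly x.1,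
      forall x, x \in s -> (0 < x.2)%N
    & mx_similar A (bdiag_comp [seq x.1 ^+ x.2 | x <- s])].

(* Fix d prime to the characteristic and k >= 0.  On the companion block of an
   elementary divisor p^e, (A^d - 1)^k acts as multiplication by (X^d - 1)^k
   modulo p^e; as X^d - 1 is squarefree, its nullity there is
   deg p * min(k, e) if ord p divides d, and 0 otherwise.  Moreover deg p is
   the order of q modulo ord p, so the nullity of (A^d - 1)^k is a sum over
   the pairs (ord p, e) with ord p | d.  Since A and A^i are powers of each
   other, these nullities agree for A and A^i, and the multiset of pairs is
   recovered from them by induction on ord p, peeling off proper divisors. *)

From Stdlib Require Import ClassicalDescription.
From HB Require Import structures.
From mathcomp Require Import all_boot all_order all_algebra all_fingroup all_field.
From mathcomp Require Import all_solvable zify.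
Set Implicit Arguments. Unset Strict Implicit. Unset Printing Implicit Defensive.

Lemma sum_minnS (s : seq nat) k :
  \sum_(x <- s) minn k.+1 x = \sum_(x <- s) minn k x + count (leq k.+1) s.
Proof.
elim: s => [|x s IH]; rewrite ?big_nil ?big_cons //= IH.
case: (ltnP k x) => /= ?; lia.
Qed.

Lemma count_leq_mem (s : seq nat) x :
  count (leq x) s = count_mem x s + count (leq x.+1) s.
Proof. by elim: s => [|y s IH] //=; rewrite IH; case: (ltngtP y x) => /= ?; lia. Qed.

Lemma perm_eq_sum_minn (s1 s2 : seq nat) : 0 \notin s1 -> 0 \notin s2 ->
  (forall k, \sum_(x <- s1) minn k x = \sum_(x <- s2) minn k x) -> perm_eq s1 s2.
Proof.
move=> /count_memPn s1_0 /count_memPn s2_0 eq_sum.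
have eq_count k : count (leq k.+1) s1 = count (leq k.+1) s2.
  by have := eq_sum k.+1; rewrite !sum_minnS eq_sum => /addnI.
apply/allP => -[|x] _ /=; apply/eqP; first by rewrite s1_0 s2_0.
by have := eq_count x; rewrite (count_leq_mem s1) (count_leq_mem s2) eq_count => /addIn.
Qed.

Definition fiber (A B : eqType) (s : seq (A * B)) (a : A) : seq B :=
  [seq y.2 | y <- s & y.1 == a].

Lemma perm_eq_fibers (A B : eqType) (s1 s2 : seq (A * B)) :
  (forall a, perm_eq (fiber s1 a) (fiber s2 a)) -> perm_eq s1 s2.
Proof.
move=> eq_fib; apply/allP => y _ /=.
have count_fiber s : count_mem y s = count_mem y.2 (fiber s y.1).
  rewrite count_map count_filter; apply: eq_count => z /=.
  by case: y z => [a b] [a' b'] /=; rewrite xpair_eqE andbC.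
by rewrite !count_fiber (seq.permP (eq_fib y.1)).
Qed.

Definition weighted_minn_sum (D : nat -> nat) (s : seq (nat * nat)) d k :=
  \sum_(y <- s) (y.1 %| d) * D y.1 * minn k y.2.

Lemma weighted_minn_sum_fibers D s d k : 0 < d ->
  weighted_minn_sum D s d k =
  \sum_(o <- divisors d) D o * \sum_(x <- fiber s o) minn k x.
Proof.
move=> d_gt0; elim: s => [|[a b] s IH].
  by rewrite /weighted_minn_sum big_nil big1_seq // => o _; rewrite big_nil muln0.
rewrite /weighted_minn_sum big_cons -/(weighted_minn_sum D s d k) IH /=.
have head_term : (a %| d) * D a * minn k b =
    \sum_(o <- divisors d) (a == o) * (D o * minn k b).
  have [a_d | a_nd] := boolP (a %| d).
    rewrite (bigD1_seq a) ?divisors_uniq -?dvdn_divisors //= eqxx big1 ?addn0 ?mulnA //.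
    by move=> o; rewrite eq_sym => /negPf ->.
  rewrite mul0n big1_seq // => o /andP[_]; rewrite -dvdn_divisors //.
  by case: eqP => [<-|]; rewrite ?(negPf a_nd).
rewrite head_term -big_split /=; apply: eq_bigr => o _.
by rewrite /fiber /=; case: eqP => _ /=; rewrite ?big_cons ?mulnDr ?mul1n ?mul0n.
Qed.

(* The fibers over the proper divisors of [o] agree by induction, so the
   sums at [d = o] isolate the [o]-fibers, which [perm_eq_sum_minn] compares. *)
Lemma perm_eq_weighted_minn_sum (P : pred nat) (D : nat -> nat)
    (s1 s2 : seq (nat * nat)) :
  (forall y, y \in s1 ++ s2 -> [&& P y.1, 0 < y.1, 0 < y.2 & 0 < D y.1]) ->
  (forall d k, P d -> 0 < d ->
     weighted_minn_sum D s1 d k = weighted_minn_sum D s2 d k) ->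
  perm_eq s1 s2.
Proof.
move=> s12_pos eq_sums; apply: perm_eq_fibers => o; elim/ltn_ind: o => o IH.
have sub1 : {subset s1 <= s1 ++ s2} by move=> y ys; rewrite mem_cat ys.
have sub2 : {subset s2 <= s1 ++ s2} by move=> y ys; rewrite mem_cat ys orbT.
have [/and3P[Po o_gt0 Do_gt0] | notQ] := boolP [&& P o, 0 < o & 0 < D o]; last first.
  have fiber_nil s : {subset s <= s1 ++ s2} -> fiber s o = [::].
    move=> sub_s; apply/eqP; rewrite -size_eq0 size_map size_filter.
    rewrite -leqn0 leqNgt -has_count; apply/hasPn => y ys.
    have /and4P[Py y_gt0 _ Dy] := s12_pos y (sub_s y ys).
    by apply: contra notQ => /eqP <-; rewrite Py y_gt0 Dy.
  by rewrite !fiber_nil.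
have fiber_pos s : {subset s <= s1 ++ s2} -> 0 \notin fiber s o.
  move=> sub_s; apply/mapP => -[y]; rewrite mem_filter => /andP[_ ys] y2_0.
  by have /and4P[_ _] := s12_pos y (sub_s y ys); rewrite -y2_0.
apply: perm_eq_sum_minn; rewrite ?fiber_pos // => k.
apply/eqP; rewrite -(eqn_pmul2l Do_gt0); apply/eqP.
have lower_fibers :
    \sum_(o' <- divisors o | o' != o) D o' * \sum_(x <- fiber s1 o') minn k x =
    \sum_(o' <- divisors o | o' != o) D o' * \sum_(x <- fiber s2 o') minn k x.
  rewrite big_seq_cond [RHS]big_seq_cond; apply: eq_bigr => o' /andP[o'_o ne_o'].
  rewrite (perm_big _ (IH o' _)) // ltn_neqAle ne_o' dvdn_leq //.
  by rewrite dvdn_divisors.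
have := eq_sums o k Po o_gt0; rewrite !weighted_minn_sum_fibers //.
rewrite !(bigD1_seq o (divisors_id o_gt0) (divisors_uniq o)) /=.
by rewrite lower_fibers => /addIn.
Qed.

Import GRing.Theory.
Local Open Scope ring_scope.

Section PolyOrd.
Variable F : fieldType.
Implicit Types p : {poly F}.

Lemma dvdp_Xn_sub1M a t : ('X^a - 1 : {poly F}) %| 'X^(a * t) - 1.
Proof. by rewrite exprM (subrX1 'X^a) dvdp_mulIl. Qed.

Lemma poly_ord_dvdn p d : (0 < d)%N -> (p %| 'X^d - 1) = (poly_ord p %| d)%N.
Proof.
move=> d_gt0; rewrite /poly_ord; case: excluded_middle_informative => [h|h]; last first.
  rewrite dvd0n (gtn_eqF d_gt0); apply/negP => pd.
  by apply: h; exists d; rewrite d_gt0 pd.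
case: ex_minnP => o /andP[o_gt0 p_o] o_min.
apply/idP/idP => [p_d|/dvdnP[t d_eq]]; last first.
  by rewrite d_eq mulnC (dvdp_trans p_o) ?dvdp_Xn_sub1M.
have Xd_split : 'X^d - 1 = 'X^(d %% o) * ('X^(o * (d %/ o)) - 1) + ('X^(d %% o) - 1)
    :> {poly F}.
  by rewrite mulrBr mulr1 -exprD addrA subrK mulnC addnC -divn_eq.
have p_r : p %| 'X^(d %% o) - 1.
  have p_m : p %| 'X^(d %% o) * ('X^(o * (d %/ o)) - 1).
    by rewrite dvdp_mull // (dvdp_trans p_o) ?dvdp_Xn_sub1M.
  by rewrite -(dvdp_addr _ p_m) -Xd_split.
rewrite /dvdn; apply/negPn/negP; rewrite -lt0n => r_gt0.
by have := o_min _ (introT andP (conj r_gt0 p_r)); rewrite leqNgt ltn_pmod.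
Qed.

Lemma poly_ord_gt0 p e : (0 < e)%N -> p %| 'X^e - 1 -> (0 < poly_ord p)%N.
Proof.
move=> e_gt0; rewrite poly_ord_dvdn //; apply: contraTT.
by rewrite -eqn0Ngt => /eqP ->; rewrite dvd0n -lt0n.
Qed.

Lemma irredp_dvd_exp p q k : irreducible_poly p -> p %| q ^+ k -> p %| q.
Proof.
move=> p_irr p_qk; apply/negPn/negP => p_nq.
have p_q_coprime : coprimep p (q ^+ k).
  by apply: coprimep_expr; rewrite irreducible_poly_coprime.
have : p %| 1 by rewrite -(Gauss_dvdpl 1 p_q_coprime) mul1r.
by rewrite dvdp1; case: p_irr => /gtn_eqF ->.
Qed.

(* If [c * o'] were the order of [p], then [p] would divide
   [X^(c o') - 1 = (X^o' - 1)^c] and hence [X^o' - 1]. *)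
Lemma coprime_poly_ord_pchar p c : c \in [pchar F] -> irreducible_poly p ->
  (0 < poly_ord p)%N -> coprime (poly_ord p) c.
Proof.
move=> c_char p_irr o_gt0; set o := poly_ord p in o_gt0 *.
have c_prime : prime c := pcharf_prime c_char.
rewrite coprime_sym prime_coprime //; apply/negP => /dvdnP [o' o_eq].
have o'_gt0 : (0 < o')%N by move: o_gt0; rewrite o_eq muln_gt0 => /andP[].
have c_charX : c \in [pchar {poly F}] by rewrite (pchar_poly F).
have : p %| 'X^o - 1 by rewrite poly_ord_dvdn.
rewrite o_eq exprM -(pFrobenius_autE c_charX) -[1](pFrobenius_aut1 c_charX).
rewrite -pFrobenius_autB_comm ?pFrobenius_autE; last exact: commr1.
move=> /(irredp_dvd_exp p_irr); rewrite poly_ord_dvdn // -/o => /dvdn_leq.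
move/(_ o'_gt0); rewrite o_eq -{2}[o']muln1 leq_pmul2l // => c_le1.
by have := prime_gt1 c_prime; rewrite ltnNge c_le1.
Qed.

(* [p^2] cannot divide [X^d - 1] since [p] would then also divide its
   derivative [d X^(d-1)]. *)
Lemma sqfree_Xn_sub1 p d : irreducible_poly p -> (0 < d)%N -> d%:R != 0 :> F ->
  ~~ (p ^+ 2 %| 'X^d - 1).
Proof.
move=> p_irr d_gt0 d_neq0; apply/negP => /dvdpP [u Xd_eq].
have p_deriv : p %| ('X^d - 1)^`().
  rewrite Xd_eq derivM expr2 derivM.
  by rewrite dvdp_add ?dvdp_mull ?dvdp_mulIl // dvdp_add ?dvdp_mulIr ?dvdp_mulIl.
move: p_deriv; rewrite derivB derivXn -polyC1 derivC subr0 -scaler_nat dvdpZr //.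
move=> /(irredp_dvd_exp p_irr) p_X; have p_Xd : p %| 'X^d by rewrite dvdp_exp.
have : p %| 'X^d - ('X^d - 1) by rewrite dvdp_sub // Xd_eq expr2 mulrA dvdp_mull.
rewrite opprB addrCA subrr addr0 dvdp1.
by case: p_irr => /gtn_eqF ->.
Qed.

Lemma sqfree_X p : irreducible_poly p -> ~~ (p ^+ 2 %| 'X).
Proof.
case=> p_gt1 _; apply/negP => /(dvdp_leq (negbT (polyX_eq0 _))).
have p_neq0 : p != 0 by rewrite -size_poly_gt0 ltnW.
by rewrite size_polyX expr2 size_mul // -subn1; lia.
Qed.

End PolyOrd.

Section QuotientField.
Variables (F : finFieldType) (p : {poly F}).
Hypotheses (p_monic : p \is monic) (p_irr : irreducible_poly p).

Let pI : monic_irreducible_poly p := (p_irr, p_monic).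
Let K := {poly %/ p with pI}.

Lemma in_qpoly_eq0 r : (in_qpoly p r == 0 :> K) = (p %| r).
Proof.
rewrite -[_ == 0]/(val (in_qpoly p r : K) == 0) /=.
by rewrite -Pdiv.IdomainMonic.modpE ?(mk_monicE pI) // -dvdpE.
Qed.

Lemma qX_expr_eq1 n : ('qX ^+ n == 1 :> K) = (p %| 'X^n - 1).
Proof. by rewrite -in_qpoly_eq0 rmorphB rmorph1 rmorphXn subr_eq0. Qed.

Lemma dvdp_Xn_sub1_card : ~~ (p %| 'X) -> p %| 'X^(#|F| ^ (size p).-1 - 1) - 1.
Proof.
rewrite -in_qpoly_eq0 -qX_expr_eq1 -(card_qfpoly pI) -/K => qX_neq0.
rewrite subn1 -(inj_eq (mulIf qX_neq0)) mul1r -exprSr.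
by rewrite prednK ?(ltnW (finNzRing_gt1 K)) // expf_card.
Qed.

(* [y |-> y^Q] fixes [F] and ['qX], hence all of [F[X]/(p)]: its [q^deg p]
   elements are then roots of [X^Q - X]. *)
Lemma size_irredp_le t :
  (0 < t)%N -> p %| 'X^(#|F| ^ t - 1) - 1 -> ((size p).-1 <= t)%N.
Proof.
move=> t_gt0 p_div; set Q := (#|F| ^ t)%N.
have F_gt1 : (1 < #|F|)%N := finNzRing_gt1 F.
have Q_gt1 : (1 < Q)%N by rewrite -[1%N](expn0 #|F|) ltn_exp2l.
have qX_fixed : 'qX ^+ Q = 'qX :> K.
  move: p_div; rewrite -qX_expr_eq1 => /eqP qX_eq1.
  by rewrite -(subnK (ltnW Q_gt1)) exprD qX_eq1 mul1r.
have [c c_prime c_char] := finPcharP F.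
have Q_pnat : [pchar K].-nat Q.
  have c_charK : c \in [pchar K] by rewrite pchar_qpoly.
  rewrite (eq_pnat _ (pcharf_eq c_charK)) pnatX (card_pprimeChar c_char).
  by rewrite pnatX pnat_id.
have fixed_F (a : F) : a ^+ Q = a.
  by rewrite /Q; elim: (t) => [|t' IH]; rewrite ?expr1 // expnSr exprM IH expf_card.
have fixed_in_qpoly u : (in_qpoly p u : K) ^+ Q = in_qpoly p u.
  elim/poly_ind: u => [|u a IH]; first by rewrite rmorph0 expr0n gtn_eqF // ltnW.
  rewrite rmorphD rmorphM /= exprDn_pchar // exprMn IH qX_fixed.
  by rewrite -!rmorphXn /= fixed_F.
have fixed_K (y : K) : y ^+ Q = y.
  have y_eq : y = in_qpoly p (y : {poly F}).
    by apply/esym/val_inj; exact: in_qpoly_small (size_mk_monic y).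
  by rewrite y_eq fixed_in_qpoly.
pose P : {poly K} := 'X^Q - 'X.
have size_P : size P = Q.+1.
  by rewrite /P size_addl ?size_polyXn // size_opp size_polyX ltnS.
have P_neq0 : P != 0 by rewrite -size_poly_eq0 size_P.
have := max_poly_roots P_neq0 (rs := enum K).
rewrite size_P -cardE card_qfpoly enum_uniq ltnS /Q leq_exp2l //; apply => //.
by apply/allP => y _; rewrite /root /P !hornerE fixed_K subrr.
Qed.

End QuotientField.

(* The order of [q] modulo [o], or 0 if [q] is not a unit modulo [o]. *)
Definition order_modn (q o : nat) : nat :=
  match excluded_middle_informative (exists t, (0 < t)%N && (o %| q ^ t - 1)%N) with
  | left h => ex_minn h
  | right _ => 0%N
  end.

Lemma size_irredp_order (F : finFieldType) (p : {poly F}) :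
  p \is monic -> irreducible_poly p -> ~~ (p %| 'X) ->
  (0 < poly_ord p)%N /\ (size p).-1 = order_modn #|F| (poly_ord p).
Proof.
move=> p_monic p_irr p_nX; set m := (size p).-1.
have F_gt1 : (1 < #|F|)%N := finNzRing_gt1 F.
have pos_sub1 t : (0 < t)%N -> (0 < #|F| ^ t - 1)%N.
  by move=> t_gt0; rewrite subn_gt0 -[1%N](expn0 #|F|) ltn_exp2l.
have m_gt0 : (0 < m)%N by case: p_irr; rewrite /m; case: (size p) => [|[]].
have p_div := dvdp_Xn_sub1_card p_monic p_irr p_nX.
have o_gt0 := poly_ord_gt0 (pos_sub1 _ m_gt0) p_div.
split => //; rewrite /order_modn.
case: excluded_middle_informative => [h|[]]; last first.
  by exists m; rewrite m_gt0 -poly_ord_dvdn ?pos_sub1.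
case: ex_minnP => t /andP[t_gt0 o_t] t_min; apply/eqP; rewrite eqn_leq.
rewrite t_min ?m_gt0 -?poly_ord_dvdn ?pos_sub1 //.
rewrite andbT; apply: (size_irredp_le p_monic p_irr t_gt0).
by rewrite poly_ord_dvdn ?pos_sub1.
Qed.

Section MulMod.
Variable F : fieldType.

(* [M] acts on row vectors, read as polynomials of degree < [N], as
   multiplication by [r] modulo [f]. *)
Definition mx_mulmod (f : {poly F}) N (M : 'M[F]_N) (r : {poly F}) :=
  forall v : 'rV_N, v *m M = poly_rV (rVpoly v * r %% f).

Variables (f : {poly F}) (N : nat).
Hypothesis size_f : size f = N.+1.

Lemma size_modp_le (u : {poly F}) : (size (u %% f)%R <= N)%N.
Proof. by rewrite -ltnS -size_f ltn_modp -size_poly_gt0 size_f. Qed.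

Lemma mx_mulmodM (M1 M2 : 'M_N) r1 r2 :
  mx_mulmod f M1 r1 -> mx_mulmod f M2 r2 -> mx_mulmod f (M1 *m M2) (r1 * r2).
Proof.
move=> M1r1 M2r2 v; rewrite mulmxA M1r1 M2r2 poly_rV_K ?size_modp_le //.
by rewrite mulrC modp_mul mulrA [_ * r2]mulrC mulrA [r2 * _]mulrC.
Qed.

Lemma mx_mulmod_scalar (b : F) : mx_mulmod f (b%:M : 'M_N) b%:P.
Proof.
move=> v; rewrite mul_mx_scalar mulrC mul_polyC modpZl modp_small.
  by rewrite linearZ /= rVpolyK.
by rewrite size_f ltnS size_poly.
Qed.

Lemma mx_mulmodB (M1 M2 : 'M_N) r1 r2 :
  mx_mulmod f M1 r1 -> mx_mulmod f M2 r2 -> mx_mulmod f (M1 - M2) (r1 - r2).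
Proof.
by move=> M1r1 M2r2 v; rewrite mulmxBr M1r1 M2r2 mulrBr modpD modpN linearB.
Qed.

Lemma mx_mulmodX (M : 'M_N) r k : mx_mulmod f M r -> mx_mulmod f (M ^+ k) (r ^+ k).
Proof.
move=> Mr; elim: k => [|k IH]; first by rewrite !expr0 -polyC1; apply: mx_mulmod_scalar.
by rewrite !exprS -mulmxE; apply: mx_mulmodM.
Qed.

End MulMod.

Section Companion.
Variable F : fieldType.

Lemma modp_Xn_monic (f : {poly F}) N : f \is monic -> size f = N.+1 ->
  'X^N %% f = 'X^N - f.
Proof.
move=> f_monic size_f; rewrite -[X in X %% _](subrK f) -[X in _ + X]mul1r addrC.
rewrite modp_addl_mul_small // size_f ltnS; apply/leq_sizeP => k N_le_k.
rewrite coefB coefXn; case: ltngtP N_le_k => // [N_lt_k|<-] _.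
  by rewrite nth_default ?size_f // subr0.
by move: f_monic; rewrite monicE lead_coefE size_f => /eqP ->; rewrite subrr.
Qed.

Lemma row_companionmx (f : {poly F}) (i : 'I_(size f).-1) : f \is monic ->
  row i (companionmx f) = poly_rV ('X^(i.+1) %% f).
Proof.
move=> f_monic; set N := (size f).-1 in i *.
have size_f : size f = N.+1 by rewrite prednK // size_poly_gt0 monic_neq0.
have N_gt0 : (0 < N)%N := leq_ltn_trans (leq0n i) (ltn_ord i).
apply/rowP => j; rewrite !mxE; case: eqP => [i_last|i_nlast].
  have -> : i.+1 = N by rewrite i_last prednK.
  by rewrite modp_Xn_monic // coefB coefXn ltn_eqF // sub0r.
rewrite modp_small ?coefXn 1?eq_sym // size_polyXn size_f !ltnS ltn_neqAle.
rewrite ltn_ord andbT; apply/eqP => iN; apply: i_nlast.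
by apply: succn_inj; rewrite iN prednK.
Qed.

Lemma rVpoly_sum N (v : 'rV[F]_N) : rVpoly v = \sum_(i < N) v 0 i *: 'X^i.
Proof. by rewrite /rVpoly poly_def; apply: eq_bigr => i _; rewrite valK. Qed.

Lemma mx_mulmod_companion (f : {poly F}) : f \is monic ->
  mx_mulmod f (companionmx f) 'X.
Proof.
move=> f_monic v; rewrite mulmx_sum_row.
under eq_bigr => i _ do rewrite row_companionmx // -linearZ -modpZl.
rewrite -linear_sum -(big_morph (fun p => p %% f) (modpD f) (mod0p f)) /=.
rewrite rVpoly_sum mulr_suml; congr (poly_rV (_ %% _)); apply: eq_bigr => i _.
by rewrite -scalerAl exprSr.
Qed.

End Companion.

Section MulModRank.
Variables (F : fieldType) (f h : {poly F}) (N : nat).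
Hypotheses (size_f : size f = N.+1) (h_neq0 : h != 0) (h_dvd_f : h %| f).

Let f_neq0 : f != 0. Proof. by rewrite -size_poly_eq0 size_f. Qed.

Let size_h_le : ((size h).-1 <= N)%N.
Proof. by have := dvdp_leq f_neq0 h_dvd_f; rewrite size_f; case: (size h). Qed.

Let N' := (N - (size h).-1)%N.
Let H : 'M[F]_(N', N) := \matrix_(i < N') poly_rV (h * 'X^i).

Lemma size_mul_rVpoly (w : 'rV_N') : (size (h * rVpoly w)%R <= N)%N.
Proof.
have size_w : (size (rVpoly w) <= N')%N := size_poly _ _.
have size_h_gt0 : (0 < size h)%N by rewrite size_poly_gt0.
apply: leq_trans (size_polyMleq _ _) _; move: size_w size_h_gt0 size_h_le.
rewrite /N'; lia.
Qed.

Lemma mulmx_multiples (w : 'rV_N') : w *m H = poly_rV (h * rVpoly w).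
Proof.
rewrite mulmx_sum_row rVpoly_sum mulr_sumr linear_sum; apply: eq_bigr => i _.
by rewrite rowK -linearZ /= scalerAr.
Qed.

Lemma rank_multiples : \rank H = N'.
Proof.
have H_inj (w : 'rV_N') : w *m H = 0 -> w = 0.
  rewrite mulmx_multiples => /(congr1 rVpoly); rewrite poly_rV_K ?size_mul_rVpoly //.
  rewrite linear0 => /eqP; rewrite mulf_eq0 (negPf h_neq0) /= => /eqP w0.
  by rewrite -[w]rVpolyK w0 linear0.
have kerH : kermx H = 0.
  apply/row_matrixP => i; rewrite row0; apply: H_inj.
  by rewrite -row_mul mulmx_ker row0.
apply/eqP; rewrite eqn_leq rank_leq_row /=.
by have := mxrank_ker H; rewrite kerH mxrank0 => /esym/eqP; rewrite subn_eq0.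
Qed.

Lemma sub_multiples (v : 'rV_N) : h %| rVpoly v -> (v <= H)%MS.
Proof.
move=> h_v; apply/submxP; exists (poly_rV (rVpoly v %/ h)).
rewrite mulmx_multiples poly_rV_K; first by rewrite mulrC divpK // rVpolyK.
rewrite size_divp // /N'; apply: leq_sub2r; exact: size_poly.
Qed.

(* The kernel of multiplication by [r] on [F[X]/(f)] consists of the
   multiples of [h], a space of dimension [N - deg h]. *)
Lemma mx_mulmod_rank r (M : 'M_N) : mx_mulmod f M r ->
  (forall u, (f %| u * r) = (h %| u)) -> \rank M = (size h).-1.
Proof.
move=> M_r ann_r.
have H_ker : (H <= kermx M)%MS.
  apply/sub_kermxP/row_matrixP => i; rewrite row_mul rowK row0 M_r.
  have size_hX : (size (h * 'X^i)%R <= N)%N.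
    by have := size_mul_rVpoly (delta_mx 0 i); rewrite rVpoly_delta.
  by rewrite poly_rV_K // modp_eq0 ?linear0 // ann_r dvdp_mulr.
have ker_H : (kermx M <= H)%MS.
  apply/row_subP => i; set v := row i (kermx M); apply: sub_multiples.
  rewrite -ann_r; apply/modp_eq0P.
  have : v *m M = 0 by rewrite /v -row_mul mulmx_ker row0.
  by rewrite M_r => /(congr1 rVpoly); rewrite poly_rV_K ?size_modp_le // linear0.
have : \rank (kermx M) = N'.
  by rewrite -rank_multiples; apply/eqmx_rank; rewrite ker_H H_ker.
by rewrite mxrank_ker /N'; have := rank_leq_col M; move: size_h_le; lia.
Qed.

End MulModRank.

Lemma mx_mulmod_rank_irredp_exp (F : fieldType) (p s : {poly F}) e k
    (M : 'M_((size (p ^+ e)).-1)) :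
  p \is monic -> irreducible_poly p -> (0 < e)%N -> ~~ (p ^+ 2 %| s) ->
  mx_mulmod (p ^+ e) M (s ^+ k) ->
  (\rank M + (p %| s)%R * ((size p).-1 * minn k e) = (size p).-1 * e)%N.
Proof.
move=> p_monic p_irr e_gt0 p2_ns M_sk.
have pe_monic : p ^+ e \is monic := monic_exp e p_monic.
have size_pe : size (p ^+ e) = (size (p ^+ e)).-1.+1.
  by rewrite prednK // size_poly_gt0 monic_neq0.
have pe_neq0 : p ^+ e != 0 := monic_neq0 pe_monic.
have [p_s | p_ns] := boolP (p %| s); last first.
  have p_s_coprime : coprimep p s by rewrite irreducible_poly_coprime.
  have ann u : (p ^+ e %| u * s ^+ k) = (p ^+ e %| u).
    by rewrite Gauss_dvdpl //; apply/coprimep_expl/coprimep_expr.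
  by rewrite (mx_mulmod_rank size_pe pe_neq0 (dvdpp _) M_sk ann) size_exp addn0.
have [t s_eq] : exists t, s = t * p by exists (s %/ p); rewrite divpK.
have p_t_coprime : coprimep p t.
  rewrite irreducible_poly_coprime //; apply: contra p2_ns => p_t.
  by rewrite s_eq expr2 dvdp_mul.
have ann u : (p ^+ e %| u * s ^+ k) = (p ^+ (e - k) %| u).
  rewrite s_eq exprMn [t ^+ k * _]mulrC mulrA.
  rewrite Gauss_dvdpl ?dvdp_exp_sub ?(monic_neq0 p_monic) //.
  exact/coprimep_expl/coprimep_expr.
have pek_neq0 : p ^+ (e - k) != 0 := monic_neq0 (monic_exp _ p_monic).
rewrite (mx_mulmod_rank size_pe pek_neq0 (dvdp_exp2l p (leq_subr k e)) M_sk ann).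
rewrite size_exp mul1n -mulnDr; congr (_ * _)%N; lia.
Qed.

Section Similarity.
Variable F : fieldType.

Lemma mx_similar_sym n m (A : 'M[F]_n) (B : 'M[F]_m) :
  mx_similar A B -> mx_similar B A.
Proof.
case=> P [Q [PQ QP AP]]; exists Q, P; split => //.
by rewrite -[Q *m A]mulmx1 -PQ !mulmxA -[Q *m A *m P]mulmxA AP mulmxA QP mul1mx.
Qed.

Lemma mx_similar_rank_le n m (A : 'M[F]_n) (B : 'M[F]_m) :
  mx_similar A B -> (\rank A <= \rank B)%N.
Proof.
case=> P [Q [PQ _ AP]]; have -> : A = P *m B *m Q by rewrite -AP -mulmxA PQ mulmx1.
by rewrite (leq_trans (mxrankM_maxl _ _)) ?mxrankM_maxr.
Qed.

Lemma mx_similar_rank n m (A : 'M[F]_n) (B : 'M[F]_m) :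
  mx_similar A B -> \rank A = \rank B.
Proof.
move=> simAB; apply/eqP; rewrite eqn_leq !mx_similar_rank_le //.
exact: mx_similar_sym.
Qed.

Lemma mx_similar_dim n m (A : 'M[F]_n) (B : 'M[F]_m) : mx_similar A B -> n = m.
Proof.
case=> P [Q [PQ QP _]].
have rank1_le k l (X : 'M[F]_(k, l)) Y : X *m Y = 1%:M -> (k <= l)%N.
  move=> XY; rewrite -[k](mxrank1 F) -XY.
  by rewrite (leq_trans (mxrankM_maxl _ _)) ?rank_leq_col.
by apply/eqP; rewrite eqn_leq (rank1_le _ _ _ _ PQ) (rank1_le _ _ _ _ QP).
Qed.

Lemma mulmx_expr_intertwine n m (A : 'M[F]_n) (B : 'M[F]_m) P j :
  A *m P = P *m B -> A ^+ j *m P = P *m B ^+ j.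
Proof.
move=> AP; elim: j => [|j IH]; first by rewrite !expr0 mul1mx mulmx1.
by rewrite !exprS -!mulmxE -mulmxA IH mulmxA AP -mulmxA.
Qed.

End Similarity.

Section PowSub.
Variable F : fieldType.

Definition powsub_mx (d : nat) (b : F) (k : nat) N (B : 'M[F]_N) :=
  (B ^+ d - b%:M) ^+ k.

Lemma mx_similar_powsub n m (A : 'M[F]_n) (B : 'M[F]_m) d b k :
  mx_similar A B -> mx_similar (powsub_mx d b k A) (powsub_mx d b k B).
Proof.
case=> P [Q [PQ QP AP]]; exists P, Q; split => //.
apply: mulmx_expr_intertwine.
by rewrite mulmxBl mulmxBr (mulmx_expr_intertwine _ AP) mul_scalar_mx mul_mx_scalar.
Qed.

Lemma expr_block_diag_mx a c (X : 'M[F]_a) (Y : 'M[F]_c) j :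
  (block_mx X 0 0 Y) ^+ j = block_mx (X ^+ j) 0 0 (Y ^+ j).
Proof.
elim: j => [|j IH]; first by rewrite !expr0 -scalar_mx_block.
rewrite !exprS -!mulmxE IH mulmx_block.
by rewrite !mulmx0 !mul0mx !addr0 !add0r.
Qed.

Lemma powsub_block_diag_mx d b k a c (X : 'M[F]_a) (Y : 'M[F]_c) :
  powsub_mx d b k (block_mx X 0 0 Y) =
  block_mx (powsub_mx d b k X) 0 0 (powsub_mx d b k Y).
Proof.
rewrite /powsub_mx expr_block_diag_mx (scalar_mx_block a c) opp_block_mx.
by rewrite add_block_mx !oppr0 !addr0 expr_block_diag_mx.
Qed.

Lemma rank_powsub_bdiag_comp d b k (s : seq {poly F}) :
  \rank (powsub_mx d b k (bdiag_comp s)) =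
  (\sum_(g <- s) \rank (powsub_mx d b k (companionmx g)))%N.
Proof.
elim: s => [|g s IH]; first by rewrite big_nil /= thinmx0 mxrank0.
by rewrite big_cons /= powsub_block_diag_mx rank_diag_block_mx IH.
Qed.

Lemma size_bdiag_comp (s : seq {poly F}) :
  foldr (fun (p : {poly F}) k => (size p).-1 + k)%N 0%N s =
  (\sum_(g <- s) (size g).-1)%N.
Proof. by elim: s => [|g s IH]; rewrite ?big_nil ?big_cons //= IH. Qed.

Lemma mx_mulmod_powsub_companion (f : {poly F}) d b k : f \is monic ->
  mx_mulmod f (powsub_mx d b k (companionmx f)) (('X^d - b%:P) ^+ k).
Proof.
move=> f_monic; have size_f : size f = (size f).-1.+1.
  by rewrite prednK // size_poly_gt0 monic_neq0.
apply/(mx_mulmodX size_f)/mx_mulmodB; last exact: mx_mulmod_scalar.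
exact/(mx_mulmodX size_f)/mx_mulmod_companion.
Qed.

End PowSub.

Section ElemDivisors.
Variable F : fieldType.

Definition powsub_nullity (s : seq ({poly F} * nat)) d (b : F) k :=
  (\sum_(x <- s) (x.1 %| 'X^d - b%:P)%R * ((size x.1).-1 * minn k x.2))%N.

Lemma rank_powsub_elem_divisors n (B : 'M[F]_n) s d b k :
  elem_divisors B s -> (forall x, x \in s -> ~~ (x.1 ^+ 2 %| 'X^d - b%:P)) ->
  (\rank (powsub_mx d b k B) + powsub_nullity s d b k = n)%N.
Proof.
case=> s_monic s_irr s_pos simB s_sqfree.
rewrite (mx_similar_rank (mx_similar_powsub d b k simB)) rank_powsub_bdiag_comp.
rewrite (mx_similar_dim simB) size_bdiag_comp !big_map /powsub_nullity -big_split /=.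
apply: eq_big_seq => x xs; rewrite [RHS]size_exp.
apply: mx_mulmod_rank_irredp_exp; rewrite ?s_monic ?s_pos ?s_sqfree //.
  exact: s_irr.
exact/mx_mulmod_powsub_companion/monic_exp/s_monic.
Qed.

Lemma elem_divisors_unit_ndvdX n (B : 'M[F]_n) s x :
  B \in unitmx -> elem_divisors B s -> x \in s -> ~~ (x.1 %| 'X).
Proof.
move=> B_unit EB xs; have [_ s_irr s_pos _] := EB.
have s_sqfree y : y \in s -> ~~ (y.1 ^+ 2 %| 'X^1 - 0%:P).
  by move=> ys; rewrite expr1 subr0 (sqfree_X (s_irr y ys)).
(* For [d = 1], [b = 0], [k = 1] the rank is that of [B], so the nullity vanishes. *)
have := rank_powsub_elem_divisors 1 EB s_sqfree.
have -> : powsub_mx 1 0 1 B = B by rewrite /powsub_mx !expr1 -scalemx1 scale0r subr0.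
rewrite mxrank_unit // -{2}[n]addn0 => /addnI /eqP.
rewrite /powsub_nullity sum_nat_seq_eq0 => /allP/(_ x xs).
rewrite expr1 subr0 /=; case: (x.1 %| 'X) => //.
have [size_gt1 _] := s_irr x xs; have := s_pos x xs.
move=> x2_gt0; rewrite mul1n muln_eq0 (minn_idPl x2_gt0) orbF -subn1 subn_eq0.
by rewrite leqNgt size_gt1.
Qed.

End ElemDivisors.

(* [Y^(dj) - 1] is a multiple of [Y^d - 1] by a matrix commuting with it. *)
Lemma rank_powsub1_expr_le (F : fieldType) N (Y : 'M[F]_N) j d k :
  (\rank (powsub_mx d 1 k (Y ^+ j)) <= \rank (powsub_mx d 1 k Y))%N.
Proof.
rewrite /powsub_mx -exprM mulnC exprM subrX1.
have comm_sum : GRing.comm (Y ^+ d - 1) (\sum_(i < j) (Y ^+ d) ^+ i).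
  apply: commr_sum => i _; apply/commr_sym/commrB; last exact: commr1.
  by rewrite /GRing.comm -!exprM -!exprD addnC.
by rewrite (exprMn_comm _ comm_sum) -mulmxE mxrankM_maxl.
Qed.

Section FiniteField.
Variable F : finFieldType.

Lemma elem_divisor_ord n (B : 'M[F]_n) s x :
  B \in unitmx -> elem_divisors B s -> x \in s ->
  (0 < poly_ord x.1)%N /\ (size x.1).-1 = order_modn #|F| (poly_ord x.1).
Proof.
move=> B_unit EB xs; have [s_monic s_irr _ _] := EB.
have x_ndvdX := elem_divisors_unit_ndvdX B_unit EB xs.
exact: size_irredp_order (s_monic x xs) (s_irr x xs) x_ndvdX.
Qed.

Lemma rank_powsub_ord n (B : 'M[F]_n) s c d k :
  c \in [pchar F] -> B \in unitmx -> elem_divisors B s ->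
  (0 < d)%N -> coprime d c ->
  (\rank (powsub_mx d 1 k B) +
   weighted_minn_sum (order_modn #|F|) [seq (poly_ord x.1, x.2) | x <- s] d k = n)%N.
Proof.
move=> c_char B_unit EB d_gt0 d_c.
have d_neq0 : d%:R != 0 :> F.
  rewrite -(dvdn_pcharf c_char); apply: contraL d_c => c_d.
  by rewrite coprime_sym prime_coprime ?c_d ?(pcharf_prime c_char).
have s_sqfree x : x \in s -> ~~ (x.1 ^+ 2 %| 'X^d - 1%:P).
  have [_ s_irr _ _] := EB; move=> xs.
  by rewrite polyC1 sqfree_Xn_sub1 //; apply: s_irr.
rewrite -[RHS](rank_powsub_elem_divisors k EB s_sqfree); congr (_ + _)%N.
rewrite /weighted_minn_sum /powsub_nullity big_map; apply: eq_big_seq => x xs /=.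
have [o_gt0 ->] := elem_divisor_ord B_unit EB xs.
by rewrite polyC1 poly_ord_dvdn // mulnA.
Qed.

Lemma elem_divisor_ord_props n (B : 'M[F]_n) s c y :
  c \in [pchar F] -> B \in unitmx -> elem_divisors B s ->
  y \in [seq (poly_ord x.1, x.2) | x <- s] ->
  [&& coprime y.1 c, 0 < y.1, 0 < y.2 & 0 < order_modn #|F| y.1]%N.
Proof.
move=> c_char B_unit EB /mapP[x xs ->] /=; have [_ x_irr x_pos _] := EB.
have [o_gt0 <-] := elem_divisor_ord B_unit EB xs.
rewrite (coprime_poly_ord_pchar c_char (x_irr x xs) o_gt0) x_pos // o_gt0 /=.
by have [+ _] := x_irr x xs; case: (size x.1) => [|[]].
Qed.

End FiniteField.

Lemma GLval_expg (R : finComUnitRingType) n (x : {'GL_n.+1[R]}) k :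
  GLval (x ^+ k)%g = GLval x ^+ k.
Proof.
by elim: k => [|k IH]; rewrite ?expg0 ?expr0 // expgS GL_ME IH exprS.
Qed.

Lemma GLval_expg_coprime_inv (R : finComUnitRingType) n (A : {'GL_n.+1[R]}) i :
  coprime i #[A]%g -> exists j, (GLval A ^+ i) ^+ j = GLval A.
Proof.
move=> i_coprime; exists (expg_invn <[A]>%g i).
have coprime_cycle : coprime #|<[A]>%g| i by rewrite -orderE coprime_sym.
by rewrite -!GLval_expg (expgK coprime_cycle (cycle_id A)).
Qed.

Theorem mainTheorem3 (F : finFieldType) (n : nat) (A : {'GL_n.+1[F]})
    (i : nat) (sA sAi : seq ({poly F} * nat)) :
  coprime i #[A]%g ->
  elem_divisors (GLval A) sA ->
  elem_divisors (GLval A ^+ i) sAi ->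
  size sAi = size sA /\
  perm_eq [seq (poly_ord x.1, x.2) | x <- sA]
          [seq (poly_ord x.1, x.2) | x <- sAi].
Proof.
move=> i_coprime EA EAi; have [j Mij] := GLval_expg_coprime_inv i_coprime.
set M := GLval A in EA EAi Mij *; have [c _ c_char] := finPcharP F.
have M_unit : M \in unitmx := GL_unitmx A.
have Mi_unit : M ^+ i \in unitmx by rewrite unitrX.
have rank_eq d k : \rank (powsub_mx d 1 k (M ^+ i)) = \rank (powsub_mx d 1 k M).
  by apply/eqP; rewrite eqn_leq rank_powsub1_expr_le -{1}Mij rank_powsub1_expr_le.
have perm : perm_eq [seq (poly_ord x.1, x.2) | x <- sA]
                    [seq (poly_ord x.1, x.2) | x <- sAi].
  apply: (perm_eq_weighted_minn_sum (P := coprime^~ c) (D := order_modn #|F|)).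
    move=> y; rewrite mem_cat => /orP[].
      exact: elem_divisor_ord_props c_char M_unit EA.
    exact: elem_divisor_ord_props c_char Mi_unit EAi.
  move=> d k d_c d_gt0; apply: (@addnI (\rank (powsub_mx d 1 k M))).
  rewrite -{2}rank_eq (rank_powsub_ord k c_char M_unit EA) //.
  by rewrite (rank_powsub_ord k c_char Mi_unit EAi).
by split=> //; have := perm_size perm; rewrite !size_map.
Qed.
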